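(* Every completely metrizable space that is almost arcwise connected and locally almost arcwise connected is arcwise connected and locally arcwise connected.
   Context: Two sets $A,B$ are joined by an arc in a set $S$ if there is a continuous $\gamma:[0,1]\to X$ with $\gamma([0,1])\subseteq S$, $\gamma(0)\in A$, $\gamma(1)\in B$. $X$ is almost arcwise connected if each pair of nonempty open subsets of $X$ can be joined by an arc in $X$. $X$ is locally almost arcwise connected at $x$ if for every neighborhood $V$ of $x$ there is a neighborhood $U\subseteq V$ of $x$ such that each pair of nonempty open subsets of $U$ can be joined by an arc in $\overline V$; locally almost arcwise connected means this holds at every point. *)

From Stdlib Require Import Reals.
Open Scope R_scope.

Definition is_metric {X : Type} (d : X -> X -> R) : Prop :=
  (forall x y, 0 <= d x y) /\
  (forall x y, d x y = 0 <-> x = y) /\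
  (forall x y, d x y = d y x) /\
  (forall x y z, d x z <= d x y + d y z).

Definition cauchy_seq {X : Type} (d : X -> X -> R) (u : nat -> X) : Prop :=
  forall eps, 0 < eps -> exists N, forall m n, (N <= m)%nat -> (N <= n)%nat ->
    d (u m) (u n) < eps.

Definition converges_to {X : Type} (d : X -> X -> R) (u : nat -> X) (l : X) : Prop :=
  forall eps, 0 < eps -> exists N, forall n, (N <= n)%nat -> d (u n) l < eps.

Definition complete_metric {X : Type} (d : X -> X -> R) : Prop :=
  forall u, cauchy_seq d u -> exists l, converges_to d u l.

Definition is_open {X : Type} (d : X -> X -> R) (U : X -> Prop) : Prop :=
  forall x, U x -> exists eps, 0 < eps /\ forall y, d x y < eps -> U y.

Definition nonempty {X : Type} (A : X -> Prop) : Prop := exists x, A x.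

Definition subset {X : Type} (A B : X -> Prop) : Prop := forall x, A x -> B x.

Definition is_nbhd {X : Type} (d : X -> X -> R) (x : X) (V : X -> Prop) : Prop :=
  exists W, is_open d W /\ W x /\ subset W V.

Definition closure {X : Type} (d : X -> X -> R) (V : X -> Prop) : X -> Prop :=
  fun x => forall eps, 0 < eps -> exists y, V y /\ d x y < eps.

(* gamma : [0,1] -> X continuous (gamma given on R, only its restriction to [0,1] matters) *)
Definition continuous_on_01 {X : Type} (d : X -> X -> R) (g : R -> X) : Prop :=
  forall t, 0 <= t <= 1 -> forall eps, 0 < eps -> exists delta, 0 < delta /\
    forall s, 0 <= s <= 1 -> Rabs (s - t) < delta -> d (g s) (g t) < eps.

Definition joined_in {X : Type} (d : X -> X -> R) (A B S : X -> Prop) : Prop :=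
  exists g : R -> X, continuous_on_01 d g /\
    (forall t, 0 <= t <= 1 -> S (g t)) /\ A (g 0) /\ B (g 1).

Definition whole {X : Type} : X -> Prop := fun _ => True.

Definition almost_arcwise_connected {X : Type} (d : X -> X -> R) : Prop :=
  forall U W, is_open d U -> nonempty U -> is_open d W -> nonempty W ->
    joined_in d U W whole.

Definition loc_almost_arcwise_connected_at {X : Type} (d : X -> X -> R) (x : X) : Prop :=
  forall V, is_nbhd d x V -> exists U, is_nbhd d x U /\ subset U V /\
    forall A B, is_open d A -> nonempty A -> subset A U ->
                is_open d B -> nonempty B -> subset B U ->
      joined_in d A B (closure d V).

Definition loc_almost_arcwise_connected {X : Type} (d : X -> X -> R) : Prop :=
  forall x, loc_almost_arcwise_connected_at d x.

Definition arcwise_connected {X : Type} (d : X -> X -> R) : Prop :=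
  forall a b : X, joined_in d (eq a) (eq b) whole.

Definition loc_arcwise_connected {X : Type} (d : X -> X -> R) : Prop :=
  forall x, forall V, is_nbhd d x V -> exists U, is_nbhd d x U /\ subset U V /\
    forall a b, U a -> U b -> joined_in d (eq a) (eq b) V.

(* Around every point p and for every r > 0 there is a ball whose points are joined to p by
   arcs inside B(p, r); both conclusions follow from this by concatenating arcs.  To join p to
   a nearby q, local almost arcwise connectedness gives an arc between small balls around p and
   q, leaving two gaps of the next scale r / 2^(k+1); filling the gaps recursively yields maps
   [chain n] that converge uniformly in the complete space, with oscillation O(r / 2^n), so the
   limit is an arc from p to q. *)
From Stdlib Require Import Reals Lra Lia Classical ClassicalEpsilon.
Open Scope R_scope.

Section Metric.
Context {X : Type} (d : X -> X -> R) (Hm : is_metric d).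

Lemma dist_ge0 x y : 0 <= d x y.
Proof. apply Hm. Qed.

Lemma dist_refl x : d x x = 0.
Proof. apply Hm; reflexivity. Qed.

Lemma dist_eq0 x y : d x y = 0 -> x = y.
Proof. apply Hm. Qed.

Lemma dist_sym x y : d x y = d y x.
Proof. apply Hm. Qed.

Lemma dist_triangle x y z : d x z <= d x y + d y z.
Proof. apply Hm. Qed.

Definition ball (x : X) (r : R) : X -> Prop := fun y => d x y < r.

Lemma ball_center x r : 0 < r -> ball x r x.
Proof. intro Hr; unfold ball; rewrite dist_refl; exact Hr. Qed.

Lemma ball_subset c x rho s : d c x + s <= rho -> subset (ball x s) (ball c rho).
Proof. intros H z Hz; unfold ball in *; pose proof (dist_triangle c x z); lra. Qed.

Lemma ball_open x r : is_open d (ball x r).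
Proof.
  intros y Hy; exists (r - d x y); split; [unfold ball in Hy; lra|].
  intros z Hz; apply (ball_subset x y r (r - d x y)); [lra | exact Hz].
Qed.

Lemma ball_nonempty x r : 0 < r -> nonempty (ball x r).
Proof. intro Hr; exists x; now apply ball_center. Qed.

Lemma ball_nbhd x r : 0 < r -> is_nbhd d x (ball x r).
Proof.
  intro Hr; exists (ball x r); split; [apply ball_open|].
  split; [now apply ball_center | now intros z].
Qed.

Lemma closure_ball_subset x r r' : r < r' -> subset (closure d (ball x r)) (ball x r').
Proof.
  intros Hr z Hz; destruct (Hz (r' - r) ltac:(lra)) as [y [Hy Hyz]]; unfold ball in *.
  pose proof (dist_triangle x y z); rewrite (dist_sym z y) in Hyz; lra.
Qed.

End Metric.

Definition concat_path {X : Type} (f g : R -> X) (t : R) : X :=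
  if Rle_dec t (1/2) then f (2 * t) else g (2 * t - 1).

Definition rev_path {X : Type} (g : R -> X) (t : R) : X := g (1 - t).

Lemma concat_path_0 {X : Type} (f g : R -> X) : concat_path f g 0 = f 0.
Proof. unfold concat_path; destruct (Rle_dec 0 (1/2)); [f_equal | ]; lra. Qed.

Lemma concat_path_1 {X : Type} (f g : R -> X) : concat_path f g 1 = g 1.
Proof. unfold concat_path; destruct (Rle_dec 1 (1/2)); [ | f_equal]; lra. Qed.

Lemma concat_path_rel {X : Type} (P : X -> X -> Prop) (f g f' g' : R -> X) :
  (forall t, 0 <= t <= 1 -> P (f t) (f' t)) -> (forall t, 0 <= t <= 1 -> P (g t) (g' t)) ->
  forall t, 0 <= t <= 1 -> P (concat_path f g t) (concat_path f' g' t).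
Proof.
  intros Hf Hg t Ht; unfold concat_path.
  destruct (Rle_dec t (1/2)); [apply Hf | apply Hg]; lra.
Qed.

Lemma concat_path_ind {X : Type} (P : X -> Prop) (f g : R -> X) :
  (forall t, 0 <= t <= 1 -> P (f t)) -> (forall t, 0 <= t <= 1 -> P (g t)) ->
  forall t, 0 <= t <= 1 -> P (concat_path f g t).
Proof. exact (concat_path_rel (fun z _ => P z) f g f g). Qed.

Section Oscillation.
Context {X : Type} (d : X -> X -> R) (Hm : is_metric d).

(* The approximations of an arc built below are not continuous, only of small oscillation. *)
Definition osc_le (g : R -> X) (c : R) : Prop :=
  forall t, 0 <= t <= 1 -> forall eps, 0 < eps -> exists delta, 0 < delta /\
    forall s, 0 <= s <= 1 -> Rabs (s - t) < delta -> d (g s) (g t) < c + eps.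

Lemma continuous_osc_le0 g : continuous_on_01 d g <-> osc_le g 0.
Proof. unfold osc_le; setoid_rewrite Rplus_0_l; reflexivity. Qed.

Lemma osc_le_mono g c c' : c <= c' -> osc_le g c -> osc_le g c'.
Proof.
  intros Hc Hg t Ht eps Heps; destruct (Hg t Ht eps Heps) as [del [Hdel H]].
  exists del; split; [exact Hdel|]; intros s Hs Hst; specialize (H s Hs Hst); lra.
Qed.

Lemma continuous_of_osc_le g : (forall c, 0 < c -> osc_le g c) -> continuous_on_01 d g.
Proof.
  intros Hg t Ht eps Heps; destruct (Hg (eps/2) ltac:(lra) t Ht (eps/2) ltac:(lra)) as [del H].
  exists del; now replace eps with (eps/2 + eps/2) by field.
Qed.

Lemma osc_le_approx f g c c' : osc_le f c -> (forall t, 0 <= t <= 1 -> d (g t) (f t) <= c') ->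
  osc_le g (c + 2 * c').
Proof.
  intros Hf Hgf t Ht eps Heps; destruct (Hf t Ht eps Heps) as [del [Hdel H]].
  exists del; split; [exact Hdel|]; intros s Hs Hst.
  pose proof (H s Hs Hst); pose proof (Hgf s Hs); pose proof (Hgf t Ht).
  pose proof (dist_triangle d Hm (g s) (f s) (g t)).
  pose proof (dist_triangle d Hm (f s) (f t) (g t)).
  rewrite (dist_sym d Hm (f t)) in *; lra.
Qed.

Lemma concat_path_osc_le f g c c' : osc_le f c -> osc_le g c' -> c' + d (f 1) (g 0) <= c ->
  osc_le (concat_path f g) c.
Proof.
  intros Hf Hg Hgap t Ht eps Heps; pose proof (dist_ge0 d Hm (f 1) (g 0)) as Hgap0.
  unfold concat_path; destruct (total_order_T t (1/2)) as [[Hlt | ->] | Hgt].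
  - destruct (Hf (2 * t) ltac:(lra) eps Heps) as [del [Hdel H]].
    exists (Rmin (del/2) (1/2 - t)); split; [apply Rmin_pos; lra|]; intros s Hs Hst.
    apply Rabs_def2 in Hst; pose proof (Rmin_l (del/2) (1/2 - t)); pose proof (Rmin_r (del/2) (1/2 - t)).
    destruct (Rle_dec s (1/2)), (Rle_dec t (1/2)); try lra.
    apply H; [lra | apply Rabs_def1; lra].
  - destruct (Hf 1 ltac:(lra) eps Heps) as [delf [Hdelf Hf']].
    destruct (Hg 0 ltac:(lra) eps Heps) as [delg [Hdelg Hg']].
    exists (Rmin (delf/2) (delg/2)); split; [apply Rmin_pos; lra|]; intros s Hs Hst.
    apply Rabs_def2 in Hst; pose proof (Rmin_l (delf/2) (delg/2)); pose proof (Rmin_r (delf/2) (delg/2)).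
    destruct (Rle_dec (1/2) (1/2)); [|lra]; replace (2 * (1/2)) with 1 by lra.
    destruct (Rle_dec s (1/2)).
    + apply Hf'; [lra | apply Rabs_def1; lra].
    + assert (d (g (2 * s - 1)) (g 0) < c' + eps) by (apply Hg'; [lra | apply Rabs_def1; lra]).
      pose proof (dist_triangle d Hm (g (2 * s - 1)) (g 0) (f 1)).
      rewrite (dist_sym d Hm (g 0)) in *; lra.
  - destruct (Hg (2 * t - 1) ltac:(lra) eps Heps) as [del [Hdel H]].
    exists (Rmin (del/2) (t - 1/2)); split; [apply Rmin_pos; lra|]; intros s Hs Hst.
    apply Rabs_def2 in Hst; pose proof (Rmin_l (del/2) (t - 1/2)); pose proof (Rmin_r (del/2) (t - 1/2)).
    destruct (Rle_dec s (1/2)), (Rle_dec t (1/2)); try lra.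
    enough (d (g (2 * s - 1)) (g (2 * t - 1)) < c' + eps) by lra.
    apply H; [lra | apply Rabs_def1; lra].
Qed.

Lemma concat_path_continuous f g : continuous_on_01 d f -> continuous_on_01 d g -> f 1 = g 0 ->
  continuous_on_01 d (concat_path f g).
Proof.
  rewrite !continuous_osc_le0; intros Hf Hg Hfg.
  apply (concat_path_osc_le f g 0 0 Hf Hg); rewrite Hfg, (dist_refl d Hm); lra.
Qed.

Lemma rev_path_continuous g : continuous_on_01 d g -> continuous_on_01 d (rev_path g).
Proof.
  intros Hg t Ht eps Heps; destruct (Hg (1 - t) ltac:(lra) eps Heps) as [del [Hdel H]].
  exists del; split; [exact Hdel|]; intros s Hs Hst; apply Rabs_def2 in Hst.
  apply H; [lra | apply Rabs_def1; lra].
Qed.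

End Oscillation.

Definition geom (r : R) (n : nat) : R := r * (/ 2) ^ n.

Lemma geom_0 r : geom r 0 = r.
Proof. unfold geom; simpl; ring. Qed.

Lemma geom_S r n : geom r (S n) = geom r n / 2.
Proof. unfold geom; simpl; field. Qed.

Lemma geom_pos r n : 0 < r -> 0 < geom r n.
Proof. intro Hr; unfold geom; apply Rmult_lt_0_compat; [exact Hr | apply pow_lt; lra]. Qed.

Lemma geom_vanishes r eps : 0 < eps -> exists N, geom r N < eps.
Proof.
  intro Heps; destruct (Rle_lt_dec r 0) as [Hr | Hr].
  { exists 0%nat; rewrite geom_0; lra. }
  destruct (pow_lt_1_zero (/ 2) ltac:(rewrite Rabs_right; lra) (eps / r)
    ltac:(apply Rdiv_lt_0_compat; lra)) as [N HN].
  exists N; specialize (HN N (le_n N)); rewrite Rabs_right in HN by (apply Rle_ge, pow_le; lra).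
  unfold geom; apply Rmult_lt_compat_l with (r := r) in HN; [|exact Hr].
  now replace (r * (eps / r)) with eps in HN by (field; lra).
Qed.

Section GeometricLimits.
Context {X : Type} (d : X -> X -> R) (Hm : is_metric d).

Lemma eq_of_dist_le_geom x y c r : (forall n, d x y <= c * geom r n) -> x = y.
Proof.
  intro H; apply (dist_eq0 d Hm); apply Rle_antisym; [|apply (dist_ge0 d Hm)].
  apply Rle_plus_epsilon; intros eps Heps.
  destruct (geom_vanishes (c * r) eps Heps) as [N HN].
  specialize (H N); unfold geom in *; lra.
Qed.

Lemma geom_tail_dist (u : nat -> X) c r : (forall n, d (u (S n)) (u n) <= c * geom r n) ->
  forall n m, (n <= m)%nat -> d (u m) (u n) <= 2 * c * geom r n.
Proof.
  intros Hu n m Hnm.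
  assert (Htel : forall j, d (u (n + j)%nat) (u n) <= 2 * c * geom r n - 2 * c * geom r (n + j)).
  { induction j as [|j IH].
    - rewrite Nat.add_0_r, (dist_refl d Hm); lra.
    - rewrite Nat.add_succ_r, geom_S.
      pose proof (Hu (n + j)%nat); pose proof (dist_triangle d Hm (u (S (n + j))) (u (n + j)%nat) (u n)).
      lra. }
  replace m with (n + (m - n))%nat by lia.
  pose proof (Htel (m - n)%nat); pose proof (Hu (n + (m - n))%nat).
  pose proof (dist_ge0 d Hm (u (S (n + (m - n)))) (u (n + (m - n))%nat)); lra.
Qed.

Lemma geom_limit (Hc : complete_metric d) (u : nat -> X) c r :
  (forall n, d (u (S n)) (u n) <= c * geom r n) ->
  exists l, forall n, d l (u n) <= 2 * c * geom r n.
Proof.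
  intro Hu; pose proof (geom_tail_dist u c r Hu) as Htail.
  destruct (Hc u) as [l Hl].
  - intros eps Heps; destruct (geom_vanishes (4 * c * r) eps Heps) as [N HN]; exists N.
    intros m n Hm' Hn'; pose proof (Htail N m Hm'); pose proof (Htail N n Hn').
    pose proof (dist_triangle d Hm (u m) (u N) (u n)); rewrite (dist_sym d Hm (u N)) in *.
    unfold geom in *; lra.
  - exists l; intro n; apply Rle_plus_epsilon; intros eps Heps.
    destruct (Hl eps Heps) as [N HN]; pose proof (HN (Nat.max N n) ltac:(lia)) as Hlim.
    pose proof (Htail n (Nat.max N n) ltac:(lia)).
    pose proof (dist_triangle d Hm l (u (Nat.max N n)) (u n)).
    rewrite (dist_sym d Hm (u (Nat.max N n))) in Hlim; lra.
Qed.

Lemma uniform_geom_limit (Hc : complete_metric d) (F : nat -> R -> X) c r :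
  (forall n t, 0 <= t <= 1 -> d (F (S n) t) (F n t) <= c * geom r n) ->
  exists G, forall n t, 0 <= t <= 1 -> d (G t) (F n t) <= 2 * c * geom r n.
Proof.
  intro HF.
  destruct (choice (fun t l => 0 <= t <= 1 -> forall n, d l (F n t) <= 2 * c * geom r n))
    as [G HG].
  - intro t; destruct (classic (0 <= t <= 1)) as [Ht | Ht].
    + destruct (geom_limit Hc (fun n => F n t) c r (fun n => HF n t Ht)) as [l Hl].
      now exists l.
    + now exists (F 0%nat t).
  - now exists G; intros n t Ht; apply HG.
Qed.

End GeometricLimits.

Section Chain.
Context {X : Type} (d : X -> X -> R) (Hm : is_metric d) (r : R) (Hr : 0 < r).
Variable linked : nat -> X -> X -> Prop.
Variable step : nat -> X -> X -> R -> X.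
Hypothesis linked_dist : forall k x y, linked k x y -> d x y < 2 * geom r k.
Hypothesis step_spec : forall k x y, linked k x y ->
  continuous_on_01 d (step k x y) /\ linked (S k) x (step k x y 0) /\
  linked (S k) (step k x y 1) y /\ (forall t, 0 <= t <= 1 -> d x (step k x y t) < 2 * geom r k).

Fixpoint chain (n k : nat) (x y : X) : R -> X :=
  match n with
  | O => fun _ => x
  | S n => concat_path (concat_path (chain n (S k) x (step k x y 0)) (step k x y))
             (chain n (S k) (step k x y 1) y)
  end.

Lemma chain_S n k x y : chain (S n) k x y =
  concat_path (concat_path (chain n (S k) x (step k x y 0)) (step k x y))
    (chain n (S k) (step k x y 1) y).
Proof. reflexivity. Qed.

Lemma chain_0 n : forall k x y, chain n k x y 0 = x.
Proof. induction n as [|n IH]; intros k x y; [reflexivity|]; rewrite chain_S, !concat_path_0; apply IH. Qed.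

Lemma chain_end n : forall k x y, linked k x y -> d (chain n k x y 1) y < 2 * geom r (k + n).
Proof.
  induction n as [|n IH]; intros k x y Hxy.
  - rewrite Nat.add_0_r; exact (linked_dist k x y Hxy).
  - rewrite chain_S, concat_path_1, Nat.add_succ_r; apply IH, step_spec, Hxy.
Qed.

(* Each junction has a continuous side, so the gaps do not accumulate in the oscillation. *)
Lemma chain_osc_le n : forall k x y, linked k x y -> osc_le d (chain n k x y) (2 * geom r (k + n)).
Proof.
  induction n as [|n IH]; intros k x y Hxy.
  - intros t _ eps Heps; exists 1; split; [lra|]; intros s _ _; simpl.
    rewrite (dist_refl d Hm); pose proof (geom_pos r (k + 0) Hr); lra.
  - destruct (step_spec k x y Hxy) as [Hcont [Hlx [Hly _]]].
    rewrite chain_S, Nat.add_succ_r; change (S (k + n)) with (S k + n)%nat.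
    apply (concat_path_osc_le d Hm _ _ _ (2 * geom r (S k + n))); [ | apply IH, Hly | ].
    + apply (concat_path_osc_le d Hm _ _ _ 0); [apply IH, Hlx | now apply continuous_osc_le0 |].
      pose proof (chain_end n (S k) x _ Hlx); lra.
    + rewrite concat_path_1, chain_0, (dist_refl d Hm); lra.
Qed.

Lemma chain_succ_dist n : forall k x y t, linked k x y -> 0 <= t <= 1 ->
  d (chain (S n) k x y t) (chain n k x y t) <= 2 * geom r (k + n).
Proof.
  induction n as [|n IH]; intros k x y t Hxy Ht.
  - destruct (step_spec k x y Hxy) as [_ [_ [_ Hnear]]].
    assert (Hx : d x x <= 2 * geom r k)
      by (rewrite (dist_refl d Hm); pose proof (geom_pos r k Hr); lra).
    assert (Hstep : forall s, 0 <= s <= 1 -> d (step k x y s) x <= 2 * geom r k)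
      by (intros s Hs; rewrite (dist_sym d Hm); left; apply Hnear, Hs).
    rewrite Nat.add_0_r, chain_S.
    apply (concat_path_ind (fun z => d z x <= 2 * geom r k)); [ | | exact Ht].
    + intros s Hs; apply (concat_path_ind (fun z => d z x <= 2 * geom r k)); [ | exact Hstep | exact Hs].
      now intros.
    + intros; apply Hstep; lra.
  - destruct (step_spec k x y Hxy) as [_ [Hlx [Hly _]]].
    rewrite Nat.add_succ_r; change (S (k + n)) with (S k + n)%nat.
    set (B := 2 * geom r (S k + n)).
    assert (Hstep : forall s, 0 <= s <= 1 -> d (step k x y s) (step k x y s) <= B)
      by (intros; rewrite (dist_refl d Hm); unfold B; pose proof (geom_pos r (S k + n) Hr); lra).
    assert (IHl := fun s => IH (S k) x (step k x y 0) s Hlx).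
    assert (IHr := fun s => IH (S k) (step k x y 1) y s Hly).
    rewrite (chain_S (S n)), (chain_S n).
    apply (concat_path_rel (fun z w => d z w <= B)); [ | exact IHr | exact Ht].
    exact (concat_path_rel (fun z w => d z w <= B) _ _ _ _ IHl Hstep).
Qed.

Lemma arc_of_linked (Hc : complete_metric d) p q : linked 0 p q ->
  exists g, continuous_on_01 d g /\ g 0 = p /\ g 1 = q /\
    forall t, 0 <= t <= 1 -> d p (g t) <= 4 * r.
Proof.
  intro Hpq.
  destruct (uniform_geom_limit d Hm Hc (fun n => chain n 0 p q) 2 r
    (fun n t Ht => chain_succ_dist n 0 p q t Hpq Ht)) as [G HG].
  exists G; split; [|split; [|split]].
  - apply (continuous_of_osc_le d); intros c Hc0.
    destruct (geom_vanishes (10 * r) c Hc0) as [N HN].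
    apply (osc_le_mono d) with (2 * geom r N + 2 * (2 * 2 * geom r N)); [unfold geom in *; lra|].
    apply (osc_le_approx d Hm (chain N 0 p q)); [exact (chain_osc_le N 0 p q Hpq)|].
    intros t Ht; exact (HG N t Ht).
  - apply (eq_of_dist_le_geom d Hm _ _ 4 r); intro n.
    pose proof (HG n 0 ltac:(lra)) as H; rewrite chain_0 in H; lra.
  - apply (eq_of_dist_le_geom d Hm _ _ 6 r); intro n.
    pose proof (HG n 1 ltac:(lra)); pose proof (chain_end n 0 p q Hpq).
    pose proof (dist_triangle d Hm (G 1) (chain n 0 p q 1) q); simpl in *; lra.
  - intros t Ht; pose proof (HG 0%nat t Ht) as H; rewrite geom_0 in H; simpl in H.
    rewrite (dist_sym d Hm); lra.
Qed.

End Chain.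

Section LocalArcs.
Context {X : Type} (d : X -> X -> R) (Hm : is_metric d).

Lemma joined_in_mono A B S S' : subset S S' -> joined_in d A B S -> joined_in d A B S'.
Proof. intros HS [g [Hg [HgS [H0 H1]]]]; exists g; repeat split; auto. Qed.

Lemma joined_in_sym A B S : joined_in d A B S -> joined_in d B A S.
Proof.
  intros [g [Hg [HgS [H0 H1]]]]; exists (rev_path g); unfold rev_path.
  split; [now apply rev_path_continuous|]; split; [intros t Ht; apply HgS; lra|].
  now rewrite Rminus_0_r, Rminus_diag.
Qed.

Lemma joined_in_trans a b c S :
  joined_in d (eq a) (eq b) S -> joined_in d (eq b) (eq c) S -> joined_in d (eq a) (eq c) S.
Proof.
  intros [f [Hf [HfS [Hf0 Hf1]]]] [g [Hg [HgS [Hg0 Hg1]]]]; exists (concat_path f g).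
  split; [apply (concat_path_continuous d Hm); [exact Hf | exact Hg | congruence]|].
  split; [now apply concat_path_ind|].
  now rewrite concat_path_0, concat_path_1.
Qed.

Definition joins_in_ball (x : X) (rho r : R) : Prop :=
  forall A B, is_open d A -> nonempty A -> subset A (ball d x rho) ->
    is_open d B -> nonempty B -> subset B (ball d x rho) -> joined_in d A B (ball d x r).

Lemma laac_joins_in_ball x r : loc_almost_arcwise_connected_at d x -> 0 < r ->
  exists rho, 0 < rho <= r /\ joins_in_ball x rho r.
Proof.
  intros Hx Hr.
  destruct (Hx (ball d x (r/2)) (ball_nbhd d Hm x (r/2) ltac:(lra)))
    as [U [[W [HWo [HWx HWU]]] [_ HU]]].
  destruct (HWo x HWx) as [eps [Heps HW]].
  exists (Rmin eps r); split; [split; [now apply Rmin_pos | apply Rmin_r]|].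
  assert (HsubU : forall C, subset C (ball d x (Rmin eps r)) -> subset C U).
  { intros C HC z Hz; apply HWU, HW; pose proof (HC z Hz); pose proof (Rmin_l eps r); unfold ball in *; lra. }
  intros A B HA HAn HAs HB HBn HBs.
  apply (joined_in_mono _ _ (closure d (ball d x (r/2)))).
  - apply (closure_ball_subset d Hm); lra.
  - apply HU; auto.
Qed.

Definition linked (r : R) (k : nat) (x y : X) : Prop :=
  exists c rho, rho <= geom r k /\ joins_in_ball c rho (geom r k) /\ d c x < rho /\ d c y < rho.

Lemma linked_sym r k x y : linked r k x y -> linked r k y x.
Proof. intros [c [rho H]]; exists c, rho; tauto. Qed.

Lemma linked_dist r k x y : linked r k x y -> d x y < 2 * geom r k.
Proof.
  intros [c [rho [Hrho [_ [Hx Hy]]]]].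
  pose proof (dist_triangle d Hm x c y); rewrite (dist_sym d Hm x c) in *; lra.
Qed.

Lemma linked_near r k x : loc_almost_arcwise_connected_at d x -> 0 < r ->
  exists rho, 0 < rho /\ forall y, d x y < rho -> linked r k x y.
Proof.
  intros Hx Hr; destruct (laac_joins_in_ball x (geom r k) Hx (geom_pos r k Hr))
    as [rho [[Hrho Hrho'] Hjoin]].
  exists rho; split; [exact Hrho|]; intros y Hy; exists x, rho.
  now rewrite (dist_refl d Hm).
Qed.

Lemma linked_step r k x y : loc_almost_arcwise_connected d -> 0 < r -> linked r k x y ->
  exists g, continuous_on_01 d g /\ linked r (S k) x (g 0) /\ linked r (S k) (g 1) y /\
    forall t, 0 <= t <= 1 -> d x (g t) < 2 * geom r k.
Proof.
  intros Hl Hr [c [rho [Hrho [Hjoin [Hcx Hcy]]]]].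
  destruct (linked_near r (S k) x (Hl x) Hr) as [sx [Hsx Hlx]].
  destruct (linked_near r (S k) y (Hl y) Hr) as [sy [Hsy Hly]].
  set (ax := Rmin sx (rho - d c x)); set (ay := Rmin sy (rho - d c y)).
  assert (Hax : 0 < ax) by (apply Rmin_pos; lra).
  assert (Hay : 0 < ay) by (apply Rmin_pos; lra).
  assert (Hsub : forall z s, d c z + s <= rho -> subset (ball d z s) (ball d c rho))
    by (intros; now apply ball_subset).
  pose proof (Rmin_l sx (rho - d c x)); pose proof (Rmin_r sx (rho - d c x)).
  pose proof (Rmin_l sy (rho - d c y)); pose proof (Rmin_r sy (rho - d c y)).
  destruct (Hjoin (ball d x ax) (ball d y ay)) as [g [Hg [HgS [Hg0 Hg1]]]].
  1, 4: apply (ball_open d Hm).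
  1, 3: now apply (ball_nonempty d Hm).
  1, 2: apply Hsub; unfold ax, ay; lra.
  exists g; split; [exact Hg|]; split; [|split].
  - apply Hlx; unfold ball, ax in *; lra.
  - apply linked_sym, Hly; unfold ball, ay in *; lra.
  - intros t Ht; specialize (HgS t Ht); unfold ball in HgS.
    pose proof (dist_triangle d Hm x c (g t)); rewrite (dist_sym d Hm x c) in *; lra.
Qed.

Lemma joined_in_small_ball (Hc : complete_metric d) (Hl : loc_almost_arcwise_connected d)
  p r : 0 < r -> exists eta, 0 < eta /\
    forall q, d p q < eta -> joined_in d (eq p) (eq q) (ball d p r).
Proof.
  intro Hr; set (r' := r / 8); assert (Hr' : 0 < r') by (unfold r'; lra).
  destruct (choice (fun (kxy : nat * X * X) g => let '(k, x, y) := kxy in linked r' k x y ->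
      continuous_on_01 d g /\ linked r' (S k) x (g 0) /\ linked r' (S k) (g 1) y /\
      (forall t, 0 <= t <= 1 -> d x (g t) < 2 * geom r' k))) as [step Hstep].
  { intros [[k x] y]; destruct (classic (linked r' k x y)) as [Hxy | Hxy].
    - destruct (linked_step r' k x y Hl Hr' Hxy) as [g Hg]; now exists g.
    - now exists (fun _ => x). }
  destruct (linked_near r' 0 p (Hl p) Hr') as [eta [Heta Hnear]].
  exists eta; split; [exact Heta|]; intros q Hq.
  destruct (arc_of_linked d Hm r' Hr' (linked r') (fun k x y => step (k, x, y))
    (linked_dist r') (fun k x y => Hstep (k, x, y)) Hc p q (Hnear q Hq))
    as [g [Hg [H0 [H1 Hball]]]].
  exists g; split; [exact Hg|]; split; [|split; congruence].
  intros t Ht; specialize (Hball t Ht); unfold ball, r' in *; lra.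
Qed.

End LocalArcs.

Theorem mainTheorem13 (X : Type) (d : X -> X -> R)
  (Hmetric : is_metric d) (Hcomplete : complete_metric d)
  (Haac : almost_arcwise_connected d)
  (Hlaac : loc_almost_arcwise_connected d) :
  arcwise_connected d /\ loc_arcwise_connected d.
Proof.
  pose proof (joined_in_small_ball d Hmetric Hcomplete Hlaac) as Hsmall.
  split.
  - intros a b.
    destruct (Hsmall a 1 ltac:(lra)) as [ea [Hea Ha]].
    destruct (Hsmall b 1 ltac:(lra)) as [eb [Heb Hb]].
    destruct (Haac (ball d a ea) (ball d b eb)) as [h [Hh [_ [Hh0 Hh1]]]];
      try apply (ball_open d Hmetric); try now apply (ball_nonempty d Hmetric).
    assert (Hmid : joined_in d (eq (h 0)) (eq (h 1)) whole) by (exists h; now repeat split).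
    apply (joined_in_trans d Hmetric _ (h 1)); [apply (joined_in_trans d Hmetric _ (h 0)) |].
    + apply (joined_in_mono d _ _ (ball d a 1)); [easy | exact (Ha _ Hh0)].
    + exact Hmid.
    + apply (joined_in_sym d), (joined_in_mono d _ _ (ball d b 1)); [easy | exact (Hb _ Hh1)].
  - intros x V [W [HWo [HWx HWV]]].
    destruct (HWo x HWx) as [r [Hr HrW]].
    destruct (Hsmall x r Hr) as [eta [Heta Hx]].
    exists (ball d x (Rmin eta r)); split; [apply ball_nbhd; [exact Hmetric | now apply Rmin_pos]|].
    split; [intros z Hz; apply HWV, HrW; pose proof (Rmin_r eta r); unfold ball in Hz; lra|].
    intros a b Ha Hb; unfold ball in Ha, Hb; pose proof (Rmin_l eta r).
    apply (joined_in_mono d _ _ (ball d x r)); [intros z Hz; apply HWV, HrW, Hz|].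
    apply (joined_in_trans d Hmetric _ x); [apply (joined_in_sym d) |]; apply Hx; lra.
Qed.
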